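(* Let $R$ be a commutative Noetherian ring of prime characteristic $p$, and let $G$ be an $x$-torsion-free left $R[x,f]$-module such that the set $\mathcal{I}(G)$ of $G$-special $R$-ideals is finite. Then there exists a uniquely determined ideal $\mathfrak{b}\in\mathcal{I}(G)$ with $\operatorname{height}\mathfrak{b}\ge1$ and $\mathfrak{b}\subset\mathfrak{c}$ for every other $\mathfrak{c}\in\mathcal{I}(G)$ with $\operatorname{height}\mathfrak{c}\ge1$. Moreover, for $g\in G$ the following are equivalent: (i) $g$ is annihilated by $\mathfrak{b}R[x,f]=\bigoplus_{n\ge0}\mathfrak{b}x^n$; (ii) there exists $c\in R^\circ\cap\mathfrak{b}$ with $cx^ng=0$ for all $n\gg0$; (iii) there exists $c\in R^\circ$ with $cx^ng=0$ for all $n\gg0$.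
   Context: $R[x,f]$ is the Frobenius skew polynomial ring: free left $R$-module on $(x^i)_{i\ge0}$, with $xr=r^px$. $G$ is $x$-torsion-free if $xg=0$ implies $g=0$. The graded annihilator $\operatorname{grann}N$ of an $R[x,f]$-submodule $N$ is the set of $\sum r_ix^i$ with each $r_ix^i$ annihilating $N$. An ideal $\mathfrak{b}$ of $R$ is $G$-special if $\operatorname{grann}N=\bigoplus_{n\ge0}\mathfrak{b}x^n$ for some $R[x,f]$-submodule $N$ of $G$; $\mathcal{I}(G)$ is the set of these. The improper ideal $R$ has infinite height. $R^\circ$ is the complement of the union of the minimal primes of $R$. *)

From HB Require Import structures.
From mathcomp Require Import all_boot all_algebra.
Set Implicit Arguments.
Unset Strict Implicit.
Unset Printing Implicit Defensive.
Import GRing.Theory.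
Local Open Scope ring_scope.

Section IdealTheory.
Variable R : comNzRingType.

Definition is_ideal (I : R -> Prop) : Prop :=
  [/\ I 0, (forall a b, I a -> I b -> I (a + b)) & (forall r a, I a -> I (r * a))].

Definition subid (I J : R -> Prop) : Prop := forall a, I a -> J a.
Definition eqid (I J : R -> Prop) : Prop := forall a, I a <-> J a.

Definition is_prime_ideal (P : R -> Prop) : Prop :=
  [/\ is_ideal P, ~ P 1 & forall a b, P (a * b) -> P a \/ P b].

Definition is_minimal_prime (P : R -> Prop) : Prop :=
  is_prime_ideal P /\ forall Q, is_prime_ideal Q -> subid Q P -> subid P Q.

Definition Rcirc (c : R) : Prop := forall P, is_minimal_prime P -> ~ P c.

Definition noetherian : Prop :=
  forall I : nat -> R -> Prop, (forall n, is_ideal (I n)) ->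
    (forall n, subid (I n) (I n.+1)) ->
    exists N, forall n, (N <= n)%N -> eqid (I n) (I N).

Definition prime_height_ge (P : R -> Prop) (n : nat) : Prop :=
  exists c : nat -> R -> Prop,
    [/\ (forall i, (i <= n)%N -> is_prime_ideal (c i)),
        (forall i, (i < n)%N -> subid (c i) (c i.+1) /\ ~ subid (c i.+1) (c i))
      & eqid (c n) P].

(* height I = inf of heights of primes containing I (= infinity for I = R);
   so height I >= n iff every prime containing I has height >= n *)
Definition height_ge (I : R -> Prop) (n : nat) : Prop :=
  forall P, is_prime_ideal P -> subid I P -> prime_height_ge P n.

End IdealTheory.

(* A left R[x,f]-module is an R-module G with an additive map xop : G -> G
   (the action of x) satisfying x (r g) = r^p (x g). *)
Section FrobMod.
Variables (R : comNzRingType) (p : nat) (G : lmodType R) (xop : G -> G).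

Definition frob_module : Prop :=
  (forall g h, xop (g + h) = xop g + xop h) /\
  (forall (r : R) g, xop (r *: g) = r ^+ p *: xop g).

Definition x_torsion_free : Prop := forall g, xop g = 0 -> g = 0.

Definition xpow (n : nat) (g : G) : G := iter n xop g.

Definition rxf_submodule (N : G -> Prop) : Prop :=
  [/\ N 0, (forall g h, N g -> N h -> N (g + h)),
      (forall (r : R) g, N g -> N (r *: g)) & (forall g, N g -> N (xop g))].

Definition ann_hom (N : G -> Prop) (n : nat) (r : R) : Prop :=
  forall g, N g -> r *: xpow n g = 0.

(* grann N = (+)_{n>=0} b x^n : the degree-n component of grann N is b, for all n *)
Definition grann_is (N : G -> Prop) (b : R -> Prop) : Prop :=
  forall n r, ann_hom N n r <-> b r.

Definition G_special (b : R -> Prop) : Prop :=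
  is_ideal b /\ exists N, rxf_submodule N /\ grann_is N b.

Definition special_finite : Prop :=
  exists (k : nat) (f : nat -> R -> Prop),
    forall b, G_special b -> exists2 i, (i < k)%N & eqid b (f i).

(* action of the element sum_i s_i x^i of R[x,f] on g *)
Definition skew_act (s : seq R) (g : G) : G :=
  \sum_(i < size s) s`_i *: xpow i g.

Definition ann_by_bRxf (b : R -> Prop) (g : G) : Prop :=
  forall s : seq R, (forall i, (i < size s)%N -> b s`_i) -> skew_act s g = 0.

End FrobMod.

From HB Require Import structures.
From mathcomp Require Import all_boot all_algebra.
From mathcomp Require Import ring.
From Stdlib Require Import Classical ClassicalEpsilon.
Import GRing.Theory.
Local Open Scope ring_scope.

(* In a Noetherian ring every ideal contains a finite product of primes
   containing it, so there are finitely many minimal primes, and by prime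
   avoidance every ideal of height >= 1 meets R°.  As G is x-torsion-free, the
   graded annihilator of an R[x,f]-submodule N is (+)_n (ann_R N) x^n, so the
   G-special ideals are exactly the annihilators of submodules; they are closed
   under finite intersections, since ann (N + N') = ann N ∩ ann N', and so is
   the condition height >= 1.  As I(G) is finite, the intersection b of all
   G-special ideals of height >= 1 is again one, hence the least.  If c ∈ R°
   kills x^n g for all n >= k, then c annihilates the submodule generated by
   x^k g, whose annihilator is therefore G-special of height >= 1 and contains
   b; as x^k (r x^n g) = r^(p^k) x^(n+k) g, torsion-freeness then gives
   b x^n g = 0 for all n. *)

Set Implicit Arguments.
Unset Strict Implicit.
Unset Printing Implicit Defensive.

Lemma exists_list_filter (T : Type) (C : T -> Prop) (L : seq T) :
  exists L', forall x, List.In x L' <-> List.In x L /\ C x.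
Proof.
elim: L => [|y L [L' HL']]; first by exists [::] => x; split=> [[]|[[]]].
case: (classic (C y)) => Cy; [exists (y :: L') | exists L'] => x /=.
- by rewrite HL'; split=> [[<-|[]]|[[<-|]]]; tauto.
- by rewrite HL'; split=> [[]|[[<-|]]]; tauto.
Qed.

Section FiniteMeet.
Variables (T : Type) (S : (T -> Prop) -> Prop).
Hypothesis S_ext : forall A B, S A -> (forall x, A x <-> B x) -> S B.
Hypothesis S_top : S (fun _ => True).
Hypothesis S_meet : forall A B, S A -> S B -> S (fun x => A x /\ B x).

Lemma meet_of_finite_family (k : nat) (f : nat -> T -> Prop) :
  (forall A, S A -> exists2 i, (i < k)%N & forall x, A x <-> f i x) ->
  S (fun x => forall A, S A -> A x).
Proof.
move=> Sfin.
have Sm m : S (fun x => forall i, (i < m)%N -> S (f i) -> f i x).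
  elim: m => [|m IHm]; first by apply: S_ext S_top _ => x; split.
  case: (classic (S (f m))) => Sfm.
    apply: S_ext (S_meet IHm Sfm) _ => x; split=> [[Hx fmx] i|Hx].
      by rewrite ltnS leq_eqVlt => /orP [/eqP -> _|/Hx].
    by split=> [i /ltnW|]; apply: Hx.
  apply: S_ext IHm _ => x; split=> Hx i; last by move=> /ltnW; apply: Hx.
  by rewrite ltnS leq_eqVlt => /orP [/eqP -> /Sfm|/Hx].
apply: S_ext (Sm k) _ => x; split=> [Hx A SA|Hx i _ Sfi]; last exact: Hx.
have [i ik Afi] := Sfin A SA; apply/Afi; apply: Hx ik _.
by apply: S_ext SA Afi.
Qed.

End FiniteMeet.

Section Ideals.
Variable R : comNzRingType.
Implicit Types (I J P Q M : R -> Prop) (a b c d r : R).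

Lemma not_subid_witness I J : ~ subid I J -> exists2 a, I a & ~ J a.
Proof.
by move=> nIJ; apply: NNPP => H; apply: nIJ => a Ia; apply: NNPP => nJa; apply: H; exists a.
Qed.

Lemma ideal0 I : is_ideal I -> I 0.
Proof. by case. Qed.

Lemma idealD I a b : is_ideal I -> I a -> I b -> I (a + b).
Proof. by case=> _ + _; apply. Qed.

Lemma idealMl I r a : is_ideal I -> I a -> I (r * a).
Proof. by case=> _ _; apply. Qed.

Lemma idealMr I a r : is_ideal I -> I a -> I (a * r).
Proof. by rewrite mulrC; apply: idealMl. Qed.

Lemma idealN I a : is_ideal I -> I a -> I (- a).
Proof. by rewrite -mulN1r; apply: idealMl. Qed.

Lemma idealX I a n : is_ideal I -> I a -> (0 < n)%N -> I (a ^+ n).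
Proof. by move=> HI Ia; case: n => // n _; rewrite exprSr; apply: idealMl. Qed.

Lemma ideal_eqid I J : is_ideal I -> eqid I J -> is_ideal J.
Proof.
move=> HI IJ; split=> [|a b /IJ Ia /IJ Ib|r a /IJ Ia]; apply/IJ.
- exact: ideal0.
- exact: idealD.
- exact: idealMl.
Qed.

Lemma prime_idealMn P a b : is_prime_ideal P -> ~ P a -> ~ P b -> ~ P (a * b).
Proof. by case=> _ _ Pab nPa nPb /Pab []. Qed.

Definition ideal_adjoin I a : R -> Prop := fun y => exists i r, I i /\ y = i + r * a.

Lemma ideal_adjoin_ideal I a : is_ideal I -> is_ideal (ideal_adjoin I a).
Proof.
move=> HI; split.
- by exists 0, 0; rewrite mul0r addr0; split=> //; apply: ideal0.
- move=> _ _ [i [r [Ii ->]]] [j [s [Ij ->]]]; exists (i + j), (r + s).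
  by rewrite mulrDl addrACA; split=> //; apply: idealD.
- move=> s _ [i [r [Ii ->]]]; exists (s * i), (s * r).
  by rewrite mulrDr mulrA; split=> //; apply: idealMl.
Qed.

Lemma ideal_adjoin_sub I a : subid I (ideal_adjoin I a).
Proof. by move=> i Ii; exists i, 0; rewrite mul0r addr0. Qed.

Lemma ideal_adjoin_mem I a : is_ideal I -> ideal_adjoin I a a.
Proof. by move=> HI; exists 0, 1; rewrite add0r mul1r; split=> //; apply: ideal0. Qed.

Lemma ideal_adjoinM I a b : is_ideal I -> I (a * b) ->
  forall u v, ideal_adjoin I a u -> ideal_adjoin I b v -> I (u * v).
Proof.
move=> HI Iab _ _ [i [r [Ii ->]]] [j [s [Ij ->]]].
have -> : (i + r * a) * (j + s * b) = i * (j + s * b) + r * a * j + r * s * (a * b).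
  by ring.
by apply: idealD HI (idealD HI (idealMr _ HI Ii) (idealMl _ HI Ij)) (idealMl _ HI Iab).
Qed.

Lemma noetherian_ind (Pr : (R -> Prop) -> Prop) : noetherian R ->
  (forall I, is_ideal I ->
     (forall J, is_ideal J -> subid I J -> ~ subid J I -> Pr J) -> Pr I) ->
  forall I, is_ideal I -> Pr I.
Proof.
move=> HN IH I0 HI0; apply: NNPP => nPrI0.
pose bad := {I | is_ideal I /\ ~ Pr I}.
have step (X : bad) : {Y : bad | subid (sval X) (sval Y) /\ ~ subid (sval Y) (sval X)}.
  apply: constructive_indefinite_description.
  case: X => I [HI nPrI] /=; apply: NNPP => nJ.
  apply/nPrI/IH => // J HJ IJ nJI; apply: NNPP => nPrJ.
  by apply: nJ; exists (exist _ J (conj HJ nPrJ)).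
pose chain n := iter n (fun X => sval (step X)) (exist _ I0 (conj HI0 nPrI0)).
have [N HNn] := HN (fun n => sval (chain n)) (fun n => (svalP (chain n)).1)
  (fun n => (svalP (step (chain n))).1).
by apply: (svalP (step (chain N))).2 => x /(HNn N.+1 (leqnSn N)).
Qed.

(* [prod_subid [:: P_1; ...; P_n] I] encodes [P_1 ... P_n <= I] on products of elements. *)
Fixpoint prod_subid (L : seq (R -> Prop)) I : Prop :=
  match L with
  | [::] => I 1
  | P :: L' => forall a, P a -> prod_subid L' (fun y => I (a * y))
  end.

Lemma prod_subid_mono L I J : subid I J -> prod_subid L I -> prod_subid L J.
Proof.
elim: L I J => [|P L IH] I J IJ /=; first exact: IJ.
by move=> HI a Pa; apply: IH (HI a Pa) => y /IJ.
Qed.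

Lemma prod_subid_cat L1 L2 I1 I2 I : prod_subid L1 I1 -> prod_subid L2 I2 ->
  (forall u v, I1 u -> I2 v -> I (u * v)) -> prod_subid (L1 ++ L2) I.
Proof.
elim: L1 I1 I => [|P L1 IH] I1 I /= HI1 HI2 HI.
  by apply: prod_subid_mono HI2 => v /(HI 1 v HI1); rewrite mul1r.
move=> a Pa; apply: IH (HI1 a Pa) HI2 _ => u v Hu Hv.
by rewrite mulrA; apply: HI.
Qed.

Lemma prod_subid_prime L I M : is_prime_ideal M -> prod_subid L I -> subid I M ->
  exists2 P, List.In P L & subid P M.
Proof.
move=> HM; elim: L I => [|P L IH] I /=.
  by case: HM => _ nM1 _ I1 /(_ 1 I1).
move=> HL IM; case: (classic (subid P M)) => [PM|/not_subid_witness [a Pa nMa]].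
  by exists P; [left|].
have [Q LQ QM] : exists2 Q, List.In Q L & subid Q M.
  apply: IH (HL a Pa) _ => y /IM.
  by case: HM => _ _ /[apply] -[].
by exists Q; [right|].
Qed.

Lemma ideal_contains_prime_product : noetherian R -> forall I, is_ideal I ->
  exists L, (forall P, List.In P L -> is_prime_ideal P /\ subid I P) /\ prod_subid L I.
Proof.
move=> HN; apply: noetherian_ind => // I HI IH.
case: (classic (I 1)) => [I1|nI1]; first by exists [::].
case: (classic (exists a b, [/\ I (a * b), ~ I a & ~ I b])); last first.
  move=> nI; exists [:: I]; split=> [P [<-|[]]|a Ia /=]; rewrite ?mulr1 //.
  split=> //; split=> // a b Iab; apply: NNPP => /not_or_and [nIa nIb].
  by apply: nI; exists a, b.
move=> [a [b [Iab nIa nIb]]].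
have adjoin_larger c : ~ I c -> exists L, (forall P, List.In P L ->
    is_prime_ideal P /\ subid (ideal_adjoin I c) P) /\ prod_subid L (ideal_adjoin I c).
  move=> nIc; apply: IH; [exact: ideal_adjoin_ideal | exact: ideal_adjoin_sub |].
  by move=> /(_ c (ideal_adjoin_mem c HI)).
have [La [HLa PLa]] := adjoin_larger a nIa.
have [Lb [HLb PLb]] := adjoin_larger b nIb.
exists (La ++ Lb); split; last exact: prod_subid_cat PLa PLb (ideal_adjoinM HI Iab).
move=> P /List.in_app_iff [/HLa|/HLb] [HP adjP]; split=> // x Ix; apply: adjP;
  exact: ideal_adjoin_sub.
Qed.

Lemma minimal_primes_finite : noetherian R ->
  exists L, (forall P, List.In P L -> is_minimal_prime P) /\
            forall M, is_minimal_prime M -> exists2 P, List.In P L & subid M P.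
Proof.
move=> HN.
have zero_ideal : is_ideal (fun y : R => y = 0).
  by split=> [|a b -> ->|r a ->]; rewrite ?addr0 ?mulr0.
have [L0 [HL0 PL0]] := ideal_contains_prime_product HN zero_ideal.
have [L HL] := exists_list_filter (@is_minimal_prime R) L0.
exists L; split=> [P /HL [] //|M [HM Mmin]].
have zero_sub : subid (fun y => y = 0) M by move=> y ->; case: HM => [[]].
have [P L0P PM] := prod_subid_prime HM PL0 zero_sub.
have [HP _] := HL0 P L0P.
have MP := Mmin P HP PM.
exists P => //; apply/HL; split=> //; split=> // Q HQ QP x Px.
by apply: (Mmin Q HQ (fun y Qy => PM y (QP y Qy))); apply: PM.
Qed.

Lemma prime_avoid_meet P L : is_prime_ideal P ->
  (forall Q, List.In Q L -> is_ideal Q /\ ~ subid Q P) ->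
  exists d, ~ P d /\ forall Q, List.In Q L -> Q d.
Proof.
move=> HP; elim: L => [|Q L IH] HL; first by exists 1; case: HP.
have [d [nPd Ld]] := IH (fun Q' LQ' => HL Q' (or_intror LQ')).
have [HQ nQP] := HL Q (or_introl erefl).
have [y Qy nPy] := not_subid_witness nQP.
exists (y * d); split; first exact: prime_idealMn.
move=> Q' [<-|LQ']; first exact: idealMr.
by apply: idealMl; [case: (HL Q' (or_intror LQ')) | apply: Ld].
Qed.

Lemma prime_avoidance I L : is_ideal I ->
  (forall P, List.In P L -> is_prime_ideal P /\ ~ subid I P) ->
  (forall P Q, List.In P L -> List.In Q L -> subid Q P -> subid P Q) ->
  exists c, I c /\ forall P, List.In P L -> ~ P c.
Proof.
move=> HI; elim: L => [|P L IH] HL Lincomp; first by exists 0; split=> //; apply: ideal0.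
have [c [Ic Lc]] := IH (fun Q LQ => HL Q (or_intror LQ))
  (fun Q Q' LQ LQ' => Lincomp Q Q' (or_intror LQ) (or_intror LQ')).
have [HP nIP] := HL P (or_introl erefl).
case: (classic (P c)) => [Pc|nPc]; last by exists c; split=> // Q [<-|/Lc].
have [d [nPd Ld]] : exists d, ~ P d /\ forall Q, List.In Q L -> Q d.
  apply: prime_avoid_meet => // Q LQ; split; first by case: (HL Q (or_intror LQ)) => [[[]]].
  by move=> /(Lincomp P Q (or_introl erefl) (or_intror LQ)) /(_ c Pc); apply: Lc.
have [a Ia nPa] := not_subid_witness nIP.
exists (c + a * d); split; first by apply: idealD Ic (idealMr _ HI Ia).
move=> Q [<-{Q}|LQ] Qcad.
  apply: (prime_idealMn HP nPa nPd); rewrite -(addKr c (a * d)).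
  by case: HP => HPi _ _; apply: idealD HPi (idealN HPi Pc) Qcad.
have [[HQ _ _] _] := HL Q (or_intror LQ).
apply: (Lc Q LQ); rewrite -(addrK (a * d) c).
by apply: idealD HQ Qcad (idealN HQ (idealMl _ HQ (Ld Q LQ))).
Qed.

Lemma height_ge_mono I J n : subid I J -> height_ge I n -> height_ge J n.
Proof. by move=> IJ hI P HP JP; apply: hI => // x /IJ /JP. Qed.

Lemma height_ge_whole n : height_ge (fun _ : R => True) n.
Proof. by move=> P [_ nP1 _] P1; case: nP1; apply: P1. Qed.

Lemma height_ge_meet I J n : is_ideal I -> is_ideal J ->
  height_ge I n -> height_ge J n -> height_ge (fun r => I r /\ J r) n.
Proof.
move=> HI HJ hI hJ P HP IJP.
case: (classic (subid I P)) => [IP|/not_subid_witness [a Ia nPa]]; first exact: hI.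
case: (classic (subid J P)) => [JP|/not_subid_witness [b Jb nPb]]; first exact: hJ.
by case: (prime_idealMn HP nPa nPb); apply: IJP; split; [apply: idealMr | apply: idealMl].
Qed.

Lemma minimal_prime_height0 M : is_minimal_prime M -> ~ prime_height_ge M 1.
Proof.
move=> [_ Mmin] [ch [chP chS chM]]; have [ch01 nch10] := chS 0%N erefl.
apply: nch10 => x /chM Mx.
by apply: (Mmin _ (chP 0%N erefl)) Mx => y /ch01 /chM.
Qed.

Lemma not_minimal_prime_height1 P : is_prime_ideal P -> ~ is_minimal_prime P ->
  prime_height_ge P 1.
Proof.
move=> HP nmin.
have [Q [HQ QP nPQ]] : exists Q, [/\ is_prime_ideal Q, subid Q P & ~ subid P Q].
  apply: NNPP => H; apply: nmin; split=> // Q HQ QP.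
  by apply: NNPP => nPQ; apply: H; exists Q.
exists (fun i => if i == 0%N then Q else P); split=> // [i|i].
- by case: (i == 0%N).
- by rewrite ltnS leqn0 => /eqP ->.
Qed.

Lemma height_ge1_not_minimal I M : height_ge I 1 -> is_minimal_prime M -> ~ subid I M.
Proof. by move=> hI HM IM; apply: (minimal_prime_height0 HM); apply: hI IM; case: HM. Qed.

Lemma Rcirc_height_ge1 I c : Rcirc c -> I c -> height_ge I 1.
Proof. by move=> Rc Ic P HP IP; apply: not_minimal_prime_height1 => // /Rc; apply; apply: IP. Qed.

Lemma height_ge1_Rcirc I : noetherian R -> is_ideal I -> height_ge I 1 ->
  exists c, I c /\ Rcirc c.
Proof.
move=> HN HI hI; have [L [Lmin Lcover]] := minimal_primes_finite HN.
have [c [Ic Lc]] : exists c, I c /\ forall P, List.In P L -> ~ P c.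
  apply: prime_avoidance => // [P LP|P Q LP LQ QP].
    by have HP := Lmin P LP; split; [case: HP | exact: height_ge1_not_minimal].
  by case: (Lmin P LP) => _; apply=> //; case: (Lmin Q LQ).
exists c; split=> // M HM Mc; have [P LP MP] := Lcover M HM.
by apply: (Lc P LP); apply: MP.
Qed.

End Ideals.

Section FrobeniusModule.
Variables (R : comNzRingType) (p : nat) (G : lmodType R) (xop : G -> G).
Hypothesis frob : frob_module p xop.
Implicit Types (N M : G -> Prop) (b : R -> Prop) (g h : G) (r c : R).

Lemma xopD g h : xop (g + h) = xop g + xop h.
Proof. by case: frob. Qed.

Lemma xopZ r g : xop (r *: g) = r ^+ p *: xop g.
Proof. by case: frob. Qed.

Lemma xop0 : xop 0 = 0.
Proof. by apply: (addrI (xop 0)); rewrite -xopD !addr0. Qed.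

Lemma xpowSr n g : xpow xop n (xop g) = xpow xop n.+1 g.
Proof. by rewrite /xpow iterSr. Qed.

Lemma xpow_add m n g : xpow xop m (xpow xop n g) = xpow xop (m + n) g.
Proof. by rewrite /xpow iterD. Qed.

Lemma xpowD n g h : xpow xop n (g + h) = xpow xop n g + xpow xop n h.
Proof. by elim: n => //= n IHn; rewrite IHn xopD. Qed.

Lemma xpow0 n : xpow xop n 0 = 0.
Proof. by elim: n => //= n IHn; rewrite IHn xop0. Qed.

Lemma xpowZ n r g : xpow xop n (r *: g) = r ^+ (p ^ n) *: xpow xop n g.
Proof.
elim: n => [|n IHn]; first by rewrite expn0 expr1.
by rewrite /= IHn xopZ -exprM expnSr.
Qed.

Definition ann N : R -> Prop := fun r => forall g, N g -> r *: g = 0.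

Lemma ann_ideal N : is_ideal (ann N).
Proof.
split=> [g _|r1 r2 H1 H2 g Ng|r r1 H1 g Ng]; first exact: scale0r.
- by rewrite scalerDl H1 ?H2 ?addr0.
- by rewrite -scalerA H1 ?scaler0.
Qed.

Lemma rxf_submodule_xpow N n g : rxf_submodule xop N -> N g -> N (xpow xop n g).
Proof. by case=> _ _ _ NX Ng; elim: n => //= n; apply: NX. Qed.

Lemma rxf_submodule0 : rxf_submodule xop (fun g => g = 0).
Proof. by split=> // [g h -> ->|r g ->|g ->]; rewrite ?addr0 ?scaler0 ?xop0. Qed.

Definition rxf_add N M : G -> Prop := fun y => exists u v, [/\ N u, M v & y = u + v].

Lemma rxf_submodule_add N M :
  rxf_submodule xop N -> rxf_submodule xop M -> rxf_submodule xop (rxf_add N M).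
Proof.
case=> N0 ND NZ NX [M0 MD MZ MX]; split.
- by exists 0, 0; rewrite addr0.
- move=> _ _ [u [v [Nu Mv ->]]] [u' [v' [Nu' Mv' ->]]].
  by exists (u + u'), (v + v'); rewrite addrACA; split; [apply: ND | apply: MD |].
- move=> r _ [u [v [Nu Mv ->]]].
  by exists (r *: u), (r *: v); rewrite scalerDr; split; [apply: NZ | apply: MZ |].
- move=> _ [u [v [Nu Mv ->]]].
  by exists (xop u), (xop v); rewrite xopD; split; [apply: NX | apply: MX |].
Qed.

Lemma ann_add N M r : rxf_submodule xop N -> rxf_submodule xop M ->
  ann (rxf_add N M) r <-> ann N r /\ ann M r.
Proof.
case=> N0 _ _ _ [M0 _ _ _]; split=> [H|[HN HM] _ [u [v [Nu Mv ->]]]].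
  by split=> g Hg; apply: H; [exists g, 0 | exists 0, g]; rewrite ?addr0 ?add0r.
by rewrite scalerDr HN ?HM ?addr0.
Qed.

Definition rxf_span g : G -> Prop :=
  fun y => forall N, rxf_submodule xop N -> N g -> N y.

Lemma rxf_span_submodule g : rxf_submodule xop (rxf_span g).
Proof.
split=> [N [] //|y z Hy Hz N HN Ng|r y Hy N HN Ng|y Hy N HN Ng]; case: (HN) => _ ND NZ NX.
- by apply: ND; [apply: Hy | apply: Hz].
- by apply: NZ; apply: Hy.
- by apply: NX; apply: Hy.
Qed.

Lemma rxf_span_xpow g n : rxf_span g (xpow xop n g).
Proof. by move=> N HN Ng; apply: rxf_submodule_xpow. Qed.

Lemma rxf_submodule_killed c :
  rxf_submodule xop (fun y => forall n, c *: xpow xop n y = 0).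
Proof.
split=> [n|y z Hy Hz n|r y Hy n|y Hy n].
- by rewrite xpow0 scaler0.
- by rewrite xpowD scalerDr Hy Hz addr0.
- by rewrite xpowZ scalerA mulrC -scalerA Hy scaler0.
- by rewrite xpowSr Hy.
Qed.

Lemma ann_span_eventually c k g : (forall n, (k <= n)%N -> c *: xpow xop n g = 0) ->
  ann (rxf_span (xpow xop k g)) c.
Proof.
move=> Hc y /(_ _ (rxf_submodule_killed c)) Hy; apply: (Hy _ 0%N) => n.
by rewrite xpow_add; apply: Hc; apply: leq_addl.
Qed.

Lemma G_specialP b : G_special xop b -> exists N, rxf_submodule xop N /\ eqid b (ann N).
Proof.
case=> _ [N [HN Hb]]; exists N; split=> // r.
by rewrite -(Hb 0%N r).
Qed.

Lemma G_special_eqid b b' : G_special xop b -> eqid b b' -> G_special xop b'.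
Proof.
case=> Hb [N [HN bN]] bb'; split; first exact: ideal_eqid Hb bb'.
by exists N; split=> // n r; rewrite bN.
Qed.

Lemma ann_by_bRxfP b g : is_ideal b ->
  ann_by_bRxf xop b g <-> forall r n, b r -> r *: xpow xop n g = 0.
Proof.
move=> Hb; split=> [H r n br|H s Hs]; last first.
  by apply: big1 => i _; apply: H; apply: Hs.
set s := rcons (nseq n 0) r.
have s_coef i : s`_i = if i == n then r else 0.
  by rewrite nth_rcons size_nseq nth_nseq if_same; case: ltngtP.
have s_b i : (i < size s)%N -> b s`_i.
  by rewrite s_coef; case: eqP => _ _ //; apply: ideal0.
have := H s s_b; rewrite /skew_act size_rcons size_nseq big_ord_recr /= s_coef eqxx.
by rewrite big1 ?add0r // => i _; rewrite s_coef ltn_eqF ?scale0r.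
Qed.

Hypotheses (p_gt0 : (0 < p)%N) (xtf : x_torsion_free xop).

Lemma xpow_eq0 n g : xpow xop n g = 0 -> g = 0.
Proof. by elim: n g => //= n IHn g /xtf /IHn. Qed.

Lemma grann_ann N : rxf_submodule xop N -> grann_is xop N (ann N).
Proof.
move=> HN n r; split=> [H g Ng|H g Ng]; last by apply: H; apply: rxf_submodule_xpow.
apply: (@xpow_eq0 n); rewrite xpowZ.
have : (0 < p ^ n)%N by rewrite expn_gt0 p_gt0.
by case: (p ^ n)%N => // k _; rewrite exprSr -scalerA H // scaler0.
Qed.

Lemma G_special_ann N : rxf_submodule xop N -> G_special xop (ann N).
Proof. by move=> HN; split; [apply: ann_ideal | exists N; split=> //; apply: grann_ann]. Qed.

Lemma G_special_whole : G_special xop (fun _ => True).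
Proof.
apply: G_special_eqid (G_special_ann rxf_submodule0) _ => r.
by split=> // _ g ->; rewrite scaler0.
Qed.

Lemma G_special_meet b b' : G_special xop b -> G_special xop b' ->
  G_special xop (fun r => b r /\ b' r).
Proof.
move=> /G_specialP [N [HN bN]] /G_specialP [M [HM b'M]].
apply: G_special_eqid (G_special_ann (rxf_submodule_add HN HM)) _ => r.
by rewrite ann_add // bN b'M.
Qed.

Definition special_height1 b := G_special xop b /\ height_ge b 1.

Lemma meet_special_height1 : special_finite xop ->
  special_height1 (fun r => forall b, special_height1 b -> b r).
Proof.
move=> [k [f Sfin]]; apply: (@meet_of_finite_family _ special_height1 _ _ _ k f).
- move=> b b' [Sb hb] bb'; split; first exact: G_special_eqid Sb bb'.
  by apply: height_ge_mono hb => r /bb'.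
- by split; [apply: G_special_whole | apply: height_ge_whole].
- move=> b b' [Sb hb] [Sb' hb']; split; first exact: G_special_meet.
  by apply: height_ge_meet => //; [case: Sb | case: Sb'].
- by move=> b [/Sfin].
Qed.

Lemma ann_xpow_tail b k g : is_ideal b ->
  (forall r n, b r -> r *: xpow xop (n + k) g = 0) ->
  forall r n, b r -> r *: xpow xop n g = 0.
Proof.
move=> Hb Hk r n br; apply: (@xpow_eq0 k).
rewrite xpowZ xpow_add addnC; apply: Hk.
by apply: idealX; rewrite ?expn_gt0 ?p_gt0.
Qed.

Lemma Rcirc_eventually_ann b g : is_ideal b ->
  (forall b', G_special xop b' -> height_ge b' 1 -> subid b b') ->
  forall c k, Rcirc c -> (forall n, (k <= n)%N -> c *: xpow xop n g = 0) ->
  forall r n, b r -> r *: xpow xop n g = 0.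
Proof.
move=> Hb bmin c k Rc Hc; apply: (@ann_xpow_tail _ k) => // r n br.
have : subid b (ann (rxf_span (xpow xop k g))).
  apply: bmin; first exact/G_special_ann/rxf_span_submodule.
  exact: Rcirc_height_ge1 Rc (ann_span_eventually (g := g) Hc).
move=> /(_ r br) ann_r; rewrite -xpow_add; apply: ann_r.
exact: rxf_span_xpow.
Qed.

End FrobeniusModule.

Theorem theorem3p12 (R : comNzRingType) (p : nat) (G : lmodType R) (xop : G -> G) :
  p \in [pchar R] ->
  noetherian R ->
  frob_module p xop ->
  x_torsion_free xop ->
  special_finite xop ->
  exists b : R -> Prop,
    [/\ G_special xop b,
        height_ge b 1,
        (forall c, G_special xop c -> height_ge c 1 -> subid b c),
        (forall b', G_special xop b' -> height_ge b' 1 ->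
            (forall c, G_special xop c -> height_ge c 1 -> subid b' c) -> eqid b' b)
      & forall g : G,
          (ann_by_bRxf xop b g <->
             exists c : R, [/\ Rcirc c, b c &
               exists N, forall n, (N <= n)%N -> c *: xpow xop n g = 0]) /\
          ((exists c : R, [/\ Rcirc c, b c &
               exists N, forall n, (N <= n)%N -> c *: xpow xop n g = 0]) <->
           (exists c : R, Rcirc c /\
               exists N, forall n, (N <= n)%N -> c *: xpow xop n g = 0))].
Proof.
move=> charRp HN frob xtf Ifin.
have p_gt0 : (0 < p)%N := prime_gt0 (pcharf_prime charRp).
pose b r := forall c, special_height1 xop c -> c r.
have [Sb hb] : special_height1 xop b := meet_special_height1 frob p_gt0 xtf Ifin.
have bmin c : G_special xop c -> height_ge c 1 -> subid b c by move=> Sc hc r; apply.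
have b_ideal : is_ideal b by case: Sb.
exists b; split=> // [b' Sb' hb' b'min r|g].
  split=> [b'r c [Sc hc]|br]; first exact: b'min Sc hc r b'r.
  by apply: br; split.
have b_ann := ann_by_bRxfP xop g b_ideal.
have b_ann_Rcirc := Rcirc_eventually_ann frob p_gt0 xtf b_ideal bmin.
have [c [bc Rc]] := height_ge1_Rcirc HN b_ideal hb.
split; split.
- by move=> /b_ann H; exists c; split=> //; exists 0%N => n _; apply: H.
- by move=> [c' [Rc' _ [N HN']]]; apply/b_ann; apply: b_ann_Rcirc Rc' HN'.
- by move=> [c' [Rc' _ HN']]; exists c'; split.
- move=> [c' [Rc' [N HN']]]; exists c; split=> //; exists 0%N => n _.
  exact: b_ann_Rcirc Rc' HN' c n bc.
Qed.
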